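(* Let $\Omega=\{x\in\mathbb{R}^n: a_i^Tx\le b_i,\ i=1,\ldots,m\}$ be a polyhedral convex set with nonempty interior, and let $f:\mathbb{R}^n\to\mathbb{R}$ be continuously differentiable with $L$-Lipschitz continuous gradient ($L>0$) and bounded below on $\Omega$ by $f_{\mathrm{low}}$. Consider the direct-search algorithm described below and suppose that at every iteration $k$ the polling set $\mathcal{D}_k$ is a $\Lambda$-positive spanning set for $B(x_k,\alpha_k)\cap\Omega$ and satisfies $\|d\|\le d_{\max}\alpha_k$ for all $d\in\mathcal{D}_k$, where $\Lambda>0$, $d_{\max}>0$. If at iteration $k$ we have $\pi(x_k)\neq0$ and $\alpha_k<\min\left(\frac{2\pi(x_k)}{(Ld_{\max}^2+\sigma)\Lambda},1\right)$, then iteration $k$ is successful.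
   Context: $\|\cdot\|$ is the Euclidean norm, $B(y,r)=\{z:\|z-y\|\le r\}$. Criticality measure: for $x\in\Omega$, $\pi(x):=\left|\min_{v:\ x+v\in\Omega,\ \|v\|\le1}\nabla f(x)^Tv\right|$. Given $x\in\Omega$, $\alpha>0$, $\Lambda\ge0$, a set $\{d_1,\ldots,d_p\}\subset\mathbb{R}^n$ is a $\Lambda$-positive spanning set for $B(x,\alpha)\cap\Omega$ if $x+d_i\in\Omega$ for all $i$ and, for every $v\in\mathbb{R}^n$ with $x+v\in\Omega$ and $\|v\|\le\alpha$, there exists $c\in\mathbb{R}^p$ with $c\ge0$, $v=\sum_ic_id_i$ and $\|c\|_1\le\Lambda$. The algorithm: inputs $x_0\in\Omega$, $\alpha_{\max}>0$, $\alpha_0\in(0,\alpha_{\max}]$, $\sigma>0$, $0<\gamma_{\mathrm{dec}}<1<\gamma_{\mathrm{inc}}$. For $k=0,1,2,\ldots$: compute a finite polling set $\mathcal{D}_k\subset\mathbb{R}^n$; if there exists $d_k\in\mathcal{D}_k$ with $x_k+d_k\in\Omega$ and $f(x_k+d_k)<f(x_k)-\frac{\sigma}{2}\alpha_k^2$, set $x_{k+1}=x_k+d_k$, $\alpha_{k+1}=\min\{\gamma_{\mathrm{inc}}\alpha_k,\alpha_{\max}\}$ (successful iteration); otherwise set $x_{k+1}=x_k$, $\alpha_{k+1}=\gamma_{\mathrm{dec}}\alpha_k$ (unsuccessful iteration). *)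

From HB Require Import structures.
From mathcomp Require Import all_boot all_order all_algebra.
From mathcomp Require Import all_classical all_reals all_analysis.
Set Implicit Arguments. Unset Strict Implicit. Unset Printing Implicit Defensive.
Import Order.TTheory GRing.Theory Num.Theory.
Import numFieldNormedType.Exports.
Local Open Scope classical_set_scope.
Local Open Scope ring_scope.

Section Defs.
Variable R : realType.
Variable n : nat.

Definition dotv (u v : 'rV[R]_n) : R := \sum_(i < n) u ord0 i * v ord0 i.
Definition enorm (v : 'rV[R]_n) : R := Num.sqrt (dotv v v).

Definition eball (y : 'rV[R]_n) (r : R) : set 'rV[R]_n :=
  [set z | enorm (z - y) <= r].

Definition polyhedron (m : nat) (a : 'I_m -> 'rV[R]_n) (b : 'I_m -> R)
  : set 'rV[R]_n := [set x | forall i, dotv (a i) x <= b i].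

(* criticality measure pi(x) = | min_{x+v in Omega, ||v||<=1} grad^T v |,
   the minimum (which exists) written as an infimum *)
Definition crit (Omega : set 'rV[R]_n) (g : 'rV[R]_n -> 'rV[R]_n)
  (x : 'rV[R]_n) : R :=
  `| inf [set dotv (g x) v | v in [set v | Omega (x + v) /\ enorm v <= 1]] |.

Definition pos_spanning (Omega : set 'rV[R]_n) (x : 'rV[R]_n) (alpha Lambda : R)
  (D : seq 'rV[R]_n) : Prop :=
  (forall d, d \in D -> Omega (x + d)) /\
  (forall v, Omega (x + v) -> enorm v <= alpha ->
     exists c : 'I_(size D) -> R,
       (forall i, 0 <= c i) /\
       v = \sum_(i < size D) c i *: nth 0 D i /\
       \sum_(i < size D) `|c i| <= Lambda).

Definition successful (Omega : set 'rV[R]_n) (f : 'rV[R]_n -> R) (sigma : R)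
  (xk : 'rV[R]_n) (alphak : R) (Dk : seq 'rV[R]_n) : Prop :=
  exists d, d \in Dk /\ Omega (xk + d) /\
    f (xk + d) < f xk - sigma / 2 * alphak ^+ 2.

Definition direct_search (Omega : set 'rV[R]_n) (f : 'rV[R]_n -> R)
  (sigma alpha_max gamma_dec gamma_inc : R)
  (x : nat -> 'rV[R]_n) (alpha : nat -> R) (D : nat -> seq 'rV[R]_n) : Prop :=
  Omega (x 0%N) /\ 0 < alpha_max /\ 0 < alpha 0%N <= alpha_max /\ 0 < sigma /\
  0 < gamma_dec < 1 /\ 1 < gamma_inc /\
  forall k : nat,
    (successful Omega f sigma (x k) (alpha k) (D k) ->
       (exists d, d \in D k /\ Omega (x k + d) /\
          f (x k + d) < f (x k) - sigma / 2 * alpha k ^+ 2 /\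
          x k.+1 = x k + d) /\
       alpha k.+1 = Num.min (gamma_inc * alpha k) alpha_max) /\
    (~ successful Omega f sigma (x k) (alpha k) (D k) ->
       x k.+1 = x k /\ alpha k.+1 = gamma_dec * alpha k).
End Defs.

From HB Require Import structures.
From mathcomp Require Import all_boot all_order all_algebra.
From mathcomp Require Import all_classical all_reals all_analysis.
From mathcomp Require Import ring lra.
Import Order.TTheory GRing.Theory Num.Theory.
Import numFieldNormedType.Exports.

Set Implicit Arguments.
Unset Strict Implicit.
Unset Printing Implicit Defensive.
Local Open Scope classical_set_scope.
Local Open Scope ring_scope.

(* Write pi = pi(x_k), alpha = alpha_k and T = (L d_max^2 + sigma) alpha^2 / 2.
   By the descent lemma f(x + d) <= f(x) + g(x).d + L/2 |d|^2, any poll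
   direction d with |d| <= d_max alpha and g(x).d < -T decreases f by more
   than sigma alpha^2 / 2.  Such a d exists: pi is almost attained by a
   feasible v with |v| <= 1, and alpha v is still feasible (convexity,
   alpha < 1) with |alpha v| <= alpha, hence a nonnegative combination of
   poll directions of total weight at most Lambda.  The bound on alpha gives
   g(x).(alpha v) < -Lambda T, so some poll direction has g(x).d < -T. *)

Section Dot.
Variables (R : realType) (n : nat).
Implicit Types u v w : 'rV[R]_n.

Lemma dotvC u v : dotv u v = dotv v u.
Proof. by apply: eq_bigr => i _; rewrite mulrC. Qed.

Lemma dotvDr u v w : dotv u (v + w) = dotv u v + dotv u w.
Proof. by rewrite /dotv -big_split; apply: eq_bigr => i _; rewrite mxE mulrDr. Qed.

Lemma dotvDl u v w : dotv (v + w) u = dotv v u + dotv w u.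
Proof. by rewrite dotvC dotvDr !(dotvC u). Qed.

Lemma dotvZr u v (s : R) : dotv u (s *: v) = s * dotv u v.
Proof. by rewrite /dotv mulr_sumr; apply: eq_bigr => i _; rewrite mxE mulrCA. Qed.

Lemma dotvZl u v (s : R) : dotv (s *: v) u = s * dotv v u.
Proof. by rewrite dotvC dotvZr dotvC. Qed.

Lemma dotvNl u v : dotv (- v) u = - dotv v u.
Proof. by rewrite -scaleN1r dotvZl mulN1r. Qed.

Lemma dotvBl u v w : dotv (v - w) u = dotv v u - dotv w u.
Proof. by rewrite dotvDl dotvNl. Qed.

Lemma dotvBr u v w : dotv u (v - w) = dotv u v - dotv u w.
Proof. by rewrite !(dotvC u) dotvBl. Qed.

Lemma dotv0r u : dotv u 0 = 0.
Proof. by rewrite /dotv big1 // => i _; rewrite mxE mulr0. Qed.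

Lemma dotv_sumr u k (F : 'I_k -> 'rV[R]_n) :
  dotv u (\sum_(i < k) F i) = \sum_(i < k) dotv u (F i).
Proof.
rewrite /dotv exchange_big /=; apply: eq_bigr => j _.
by rewrite summxE mulr_sumr.
Qed.

Lemma dotv_ge0 v : 0 <= dotv v v.
Proof. by apply: sumr_ge0 => i _; rewrite -expr2 sqr_ge0. Qed.

Lemma dotv_eq0l u v : dotv u u = 0 -> dotv u v = 0.
Proof.
move=> /eqP; rewrite psumr_eq0 => [uu0|i _]; last by rewrite -expr2 sqr_ge0.
rewrite /dotv big1 // => i _.
have /implyP := allP uu0 i (mem_index_enum _).
by rewrite -expr2 sqrf_eq0 => /(_ isT) /eqP ->; rewrite mul0r.
Qed.

Lemma enorm_ge0 v : 0 <= enorm v.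
Proof. exact: sqrtr_ge0. Qed.

Lemma enorm_sqr v : enorm v ^+ 2 = dotv v v.
Proof. by rewrite sqr_sqrtr // dotv_ge0. Qed.

Lemma enorm0 : enorm (0 : 'rV[R]_n) = 0.
Proof. by rewrite /enorm dotv0r sqrtr0. Qed.

Lemma enormZ v (s : R) : enorm (s *: v) = `|s| * enorm v.
Proof.
by rewrite /enorm dotvZl dotvZr mulrA -expr2 sqrtrM ?sqr_ge0 // sqrtr_sqr.
Qed.

Lemma enormN v : enorm (- v) = enorm v.
Proof. by rewrite -scaleN1r enormZ normrN1 mul1r. Qed.

Lemma CauchySchwarz_dotv u v : dotv u v <= enorm u * enorm v.
Proof.
have [uu0|uu_neq0] := eqVneq (dotv u u) 0.
  by rewrite dotv_eq0l // mulr_ge0 ?enorm_ge0.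
have [vv0|vv_neq0] := eqVneq (dotv v v) 0.
  by rewrite dotvC dotv_eq0l // mulr_ge0 ?enorm_ge0.
have u_gt0 : 0 < enorm u by rewrite sqrtr_gt0 lt0r uu_neq0 dotv_ge0.
have v_gt0 : 0 < enorm v by rewrite sqrtr_gt0 lt0r vv_neq0 dotv_ge0.
have := dotv_ge0 (enorm v *: u - enorm u *: v).
rewrite dotvBl !dotvBr !dotvZl !dotvZr (dotvC v u) -!enorm_sqr.
set p := enorm u; set q := enorm v => sq_ge0.
have pq_gt0 : 0 < p * q by rewrite mulr_gt0.
nra.
Qed.

End Dot.

Section Descent.
Variables (R : realType) (n : nat).
Variables (f : 'rV[R]_n -> R) (g : 'rV[R]_n -> 'rV[R]_n) (L : R).
Hypothesis f_grad : forall z, differentiable f z /\ forall v, 'd f z v = dotv (g z) v.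
Hypothesis L_ge0 : 0 <= L.
Hypothesis g_lipschitz : forall y z, enorm (g y - g z) <= L * enorm (y - z).
Implicit Types (x d : 'rV[R]_n) (t : R).

Lemma is_derive_line x d t :
  is_derive t 1 (fun s => f (x + s *: d)) (dotv (g (x + t *: d)) d).
Proof.
pose h := fun s : R => x + s *: d.
have dh : is_diff t h (fun s : R => 0 + s *: d) by exact: is_diffD.
have h_diff : differentiable h t := @ex_diff _ _ _ _ _ _ _ dh.
have fh_diff : differentiable (f \o h) t.
  by apply: differentiable_comp => //; exact: (f_grad _).1.
have -> : dotv (g (x + t *: d)) d = 'D_1 (f \o h) t.
  rewrite deriveE // diff_comp //; last exact: (f_grad _).1.
  by rewrite /= diff_val /= add0r scale1r (f_grad _).2.
by apply: derivableP; exact: diff_derivable.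
Qed.

Lemma dotv_grad_line_le x d t : 0 <= t ->
  dotv (g (x + t *: d)) d <= dotv (g x) d + L * t * dotv d d.
Proof.
move=> t_ge0.
have -> : g (x + t *: d) = g x + (g (x + t *: d) - g x) by rewrite [RHS]addrC subrK.
rewrite dotvDl lerD2l; apply: le_trans (CauchySchwarz_dotv _ _) _.
have := g_lipschitz (x + t *: d) x.
rewrite addrAC subrr add0r enormZ ger0_norm // => g_lip.
apply: le_trans (ler_wpM2r (enorm_ge0 d) g_lip) _.
by rewrite -enorm_sqr expr2 !mulrA.
Qed.

Lemma descent_lemma x d : f (x + d) <= f x + dotv (g x) d + L / 2 * dotv d d.
Proof.
set c := L / 2 * dotv d d.
(* The quadratic correction absorbs the Lipschitz growth of the slope along
   the segment, so that psi has slope at most g(x).d. *)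
pose psi : R -> R := (fun s => f (x + s *: d)) - c *: (@idfun R) ^+ 2.
have psi_derive t : is_derive t 1 psi (dotv (g (x + t *: d)) d - c * (2 * t)).
  apply: is_derive_eq (is_deriveB (is_derive_line x d t)
    (is_deriveZ c (is_deriveX 2 (is_derive_id t 1)))) _.
  by rewrite expr1 /GRing.scale /= mulr1.
have [t /[1!in_itv] /andP[t_gt0 _]] :
    exists2 t, t \in `]0, 1[%R &
      psi 1 - psi 0 = (dotv (g (x + t *: d)) d - c * (2 * t)) * (1 - 0).
  apply: MVT; first exact: ltr01.
  by apply: derivable_within_continuous => t _; case: (psi_derive t).
rewrite /psi !fctE /= scale0r scale1r addr0 expr1n expr0n.
rewrite -[c *: 1]/(c * 1) -[c *: 0]/(c * 0) mulr1 mulr0 !subr0 mulr1.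
have := dotv_grad_line_le x d (ltW t_gt0).
have -> : c * (2 * t) = L * t * dotv d d by rewrite /c; field.
lra.
Qed.

Lemma sufficient_decrease_of_poll_dir x d (d_max sigma alpha : R) :
  enorm d <= d_max * alpha ->
  dotv (g x) d < - ((L * d_max ^+ 2 + sigma) * alpha ^+ 2 / 2) ->
  f (x + d) < f x - sigma / 2 * alpha ^+ 2.
Proof.
move=> d_le gd_lt.
have dd_le : dotv d d <= d_max ^+ 2 * alpha ^+ 2.
  rewrite -enorm_sqr -exprMn ler_sqr ?nnegrE ?enorm_ge0 //.
  exact: le_trans (enorm_ge0 d) d_le.
have T_split : (L * d_max ^+ 2 + sigma) * alpha ^+ 2 / 2 =
  L / 2 * (d_max ^+ 2 * alpha ^+ 2) + sigma / 2 * alpha ^+ 2 by ring.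
have := descent_lemma x d.
have : L / 2 * dotv d d <= L / 2 * (d_max ^+ 2 * alpha ^+ 2).
  by rewrite ler_wpM2l // divr_ge0.
lra.
Qed.

End Descent.

Lemma nonneg_comb_lt (R : realDomainType) k (c r : 'I_k -> R) (Lambda T : R) :
  (forall i, 0 <= c i) -> \sum_i c i <= Lambda -> 0 <= T ->
  \sum_i c i * r i < - (T * Lambda) -> exists i, r i < - T.
Proof.
move=> c_ge0 c_sum T_ge0 comb_lt.
have [/existsP[i r_lt]|] := boolP [exists i, r i < - T]; first by exists i.
rewrite negb_exists => /forallP r_ge.
have : \sum_i c i * - T <= \sum_i c i * r i.
  by apply: ler_sum => i _; rewrite ler_wpM2l // leNgt.
rewrite -mulr_suml.
have : (\sum_i c i) * T <= Lambda * T by rewrite ler_wpM2r.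
lra.
Qed.

Section DirectSearch.
Variables (R : realType) (n : nat).
Implicit Types (x v w : 'rV[R]_n) (Omega : set 'rV[R]_n).

Lemma polyhedron_segment m (a : 'I_m -> 'rV[R]_n) b x v t :
  polyhedron a b x -> polyhedron a b (x + v) -> 0 <= t -> t <= 1 ->
  polyhedron a b (x + t *: v).
Proof.
move=> ax_le axv_le t_ge0 t_le1 i.
have := ax_le i; have := axv_le i; rewrite !dotvDr dotvZr.
nra.
Qed.

Lemma crit_adherent Omega (g : 'rV[R]_n -> 'rV[R]_n) x e : Omega x -> 0 < e ->
  exists v, [/\ Omega (x + v), enorm v <= 1 & dotv (g x) v < e - crit Omega g x].
Proof.
move=> Ox e_gt0; rewrite /crit.
set S := [set dotv (g x) v | v in _].
have S0 : S 0.
  by exists 0; [split; [rewrite addr0 | rewrite enorm0] | exact: dotv0r].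
have S_lb : lbound S (- enorm (g x)).
  move=> _ [v [_ v_le1] <-]; rewrite lerNl -dotvNl.
  apply: le_trans (CauchySchwarz_dotv _ _) _.
  by rewrite enormN ler_piMr ?enorm_ge0.
have S_inf : has_inf S by split; [exists 0 | exists (- enorm (g x))].
have inf_le0 : inf S <= 0 by apply: ge_inf => //; exists (- enorm (g x)).
have [_ [v [Ov v_le1] <-] v_lt] := inf_adherent e_gt0 S_inf.
by exists v; split=> //; rewrite ler0_norm // opprK addrC.
Qed.

Lemma pos_spanning_descent_dir Omega x alpha Lambda D u w T :
  pos_spanning Omega x alpha Lambda D -> Omega (x + w) -> enorm w <= alpha ->
  0 <= T -> dotv u w < - (T * Lambda) -> exists2 d, d \in D & dotv u d < - T.
Proof.
move=> [_ span] Ow w_le T_ge0 uw_lt.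
have [c [c_ge0 [w_def c_sum]]] := span w Ow w_le.
have c_sum' : \sum_i c i <= Lambda.
  by apply: le_trans _ c_sum; apply: ler_sum => i _; exact: ler_norm.
have comb_lt : \sum_i c i * dotv u (nth 0 D i) < - (T * Lambda).
  by move: uw_lt; rewrite w_def dotv_sumr; under eq_bigr do rewrite dotvZr.
have [i ui_lt] := nonneg_comb_lt c_ge0 c_sum' T_ge0 comb_lt.
by exists (nth 0 D i); first exact: mem_nth.
Qed.

Lemma direct_search_feasible Omega f (sigma alpha_max gamma_dec gamma_inc : R)
    (x : nat -> 'rV[R]_n) alpha D :
  direct_search Omega f sigma alpha_max gamma_dec gamma_inc x alpha D ->
  forall k, Omega (x k) /\ 0 < alpha k.
Proof.
move=> [Ox0 [amax_gt0 [/andP[alpha0_gt0 _] [_ [/andP[gdec_gt0 _] [ginc_gt1 step]]]]]].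
elim=> [//|k [Oxk alphak_gt0]].
have [succ|fail] := pselect (successful Omega f sigma (x k) (alpha k) (D k)).
  have [[d [_ [Oxd [_ ->]]]] ->] := (step k).1 succ.
  by rewrite lt_min amax_gt0 andbT mulr_gt0 // (lt_trans ltr01).
have [-> ->] := (step k).2 fail.
by rewrite mulr_gt0.
Qed.

End DirectSearch.

Theorem lemma4p6 (R : realType) (n m : nat)
  (a : 'I_m -> 'rV[R]_n) (b : 'I_m -> R)
  (f : 'rV[R]_n -> R) (g : 'rV[R]_n -> 'rV[R]_n) (L f_low : R)
  (Lambda d_max sigma alpha_max gamma_dec gamma_inc : R)
  (x : nat -> 'rV[R]_n) (alpha : nat -> R) (D : nat -> seq 'rV[R]_n) :
  (* Omega has nonempty interior *)
  (exists y r, 0 < r /\ eball y r `<=` polyhedron a b) ->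
  (* f continuously differentiable with gradient g *)
  (forall z, differentiable f z /\ forall v, 'd f z v = dotv (g z) v) ->
  continuous g ->
  (* L-Lipschitz gradient *)
  0 < L ->
  (forall y z, enorm (g y - g z) <= L * enorm (y - z)) ->
  (* bounded below on Omega *)
  (forall z, polyhedron a b z -> f_low <= f z) ->
  0 < Lambda -> 0 < d_max ->
  direct_search (polyhedron a b) f sigma alpha_max gamma_dec gamma_inc x alpha D ->
  (forall k, pos_spanning (polyhedron a b) (x k) (alpha k) Lambda (D k)) ->
  (forall k d, d \in D k -> enorm d <= d_max * alpha k) ->
  forall k : nat,
    crit (polyhedron a b) g (x k) != 0 ->
    alpha k < Num.min (2 * crit (polyhedron a b) g (x k) /
                         ((L * d_max ^+ 2 + sigma) * Lambda)) 1 ->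
    successful (polyhedron a b) f sigma (x k) (alpha k) (D k).
Proof.
move=> _ f_grad _ L_gt0 g_lip _ Lambda_gt0 d_max_gt0 search span D_le k.
have [x_feas alpha_gt0] := direct_search_feasible search k.
have sigma_gt0 : 0 < sigma by case: search => [_ [_ [_ []]]].
set pi := crit _ g (x k); set al := alpha k; set Q := L * d_max ^+ 2 + sigma.
move=> pi_neq0; rewrite lt_min => /andP[al_lt al_lt1].
have pi_gt0 : 0 < pi by rewrite lt0r pi_neq0 normr_ge0.
have Q_gt0 : 0 < Q by rewrite addr_gt0 // mulr_gt0 // exprn_gt0.
have e_gt0 : 0 < pi - Q * Lambda * al / 2.
  by move: al_lt; rewrite ltr_pdivlMr ?mulr_gt0 //; lra.
have [v [v_feas v_le1 gv_lt]] := crit_adherent g x_feas e_gt0.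
have w_feas := polyhedron_segment x_feas v_feas (ltW alpha_gt0) (ltW al_lt1).
have w_le : enorm (al *: v) <= al by rewrite enormZ gtr0_norm // ler_piMr // ltW.
have T_ge0 : 0 <= Q * al ^+ 2 / 2 by rewrite divr_ge0 // mulr_ge0 ?sqr_ge0 // ltW.
have gw_lt : dotv (g (x k)) (al *: v) < - (Q * al ^+ 2 / 2 * Lambda).
  rewrite -/pi in gv_lt; rewrite dotvZr.
  have : al * (dotv (g (x k)) v + Q * Lambda * al / 2) < 0.
    by rewrite pmulr_rlt0 //; lra.
  lra.
have [d dD gd_lt] := pos_spanning_descent_dir (span k) w_feas w_le T_ge0 gw_lt.
exists d; split=> //; split; first exact: (span k).1.
exact: (sufficient_decrease_of_poll_dir f_grad (ltW L_gt0) g_lip (D_le k d dD) gd_lt).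
Qed.
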